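(* Let $M=(r,q,u)$ be a floor-randomized mechanism satisfying DD. Then for all probability distributions $G,G'$ on $\Theta$ with $G'\succeq_{\rm fosd}G$ (i.e. $G'(\theta)\le G(\theta)$ for all $\theta$), $\mathrm{RS}_\alpha(M,G)\ge\mathrm{RS}_\alpha(M,G')$.
   Context: Setting. Let $\Theta=[\underline\theta,\overline\theta]$ with $0<\underline\theta<\overline\theta$. Let $c>0$ and let $P:\mathbb R_+\to\mathbb R_+$ be continuous and strictly decreasing with $P(\overline q)=0$ for some $\overline q>0$. Put $V(q)=\int_0^q P(z)\,dz$ and $\mathrm{TS}(\theta,q)=V(q)-c-\theta q$ for $q>0$, $\mathrm{TS}(\theta,0)=0$. Assume (A2): $\mathrm{TS}(\overline\theta,P^{-1}(\overline\theta))>0$. A mechanism is a triple $M=(r,q,u)$ of functions $r:\Theta\to[0,1]$, $q:\Theta\to[0,\overline q]$, $u:\Theta\to\mathbb R$ with $q(\theta)=0$ if and only if $r(\theta)=0$. It is IC if $u(\theta)\ge u(\theta')+(\theta'-\theta)q(\theta')r(\theta')$ for all $\theta,\theta'\in\Theta$, and IR if $u(\theta)\ge 0$ for all $\theta$. (Known fact: $M$ is IC iff $\theta\mapsto q(\theta)r(\theta)$ is nonincreasing and $u(\theta)=u(\overline\theta)+\int_\theta^{\overline\theta}q(z)r(z)\,dz$ for all $\theta$; an IC mechanism is IR iff $u(\overline\theta)\ge0$.) Fix $\alpha\in[0,1)$. The regulator's surplus at $\theta$ is $\mathrm{RS}_\alpha(\theta,M)=r(\theta)\,\mathrm{TS}(\theta,q(\theta))-(1-\alpha)u(\theta)$.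 For a probability distribution (CDF) $G$ on $\Theta$, $\mathrm{RS}_\alpha(M,G)=\int_\Theta \mathrm{RS}_\alpha(\theta,M)\,dG(\theta)$. The quantity floor $\hat q$ is the unique $q>0$ with $V(q)-qP(q)=c$. A mechanism $(r,q,u)$ is floor-randomized if it is IC, IR, $u(\overline\theta)=0$, and $\Theta$ can be partitioned into three pairwise disjoint (possibly empty) intervals $\Theta_1,\Theta_{01},\Theta_0$, with every element of $\Theta_0$ larger than every element of $\Theta_{01}$ and every element of $\Theta_{01}$ larger than every element of $\Theta_1$, such that: $q(\theta)\ge\hat q$ and $r(\theta)=1$ for $\theta\in\Theta_1$; $q(\theta)=\hat q$ and $r(\theta)\in(0,1)$ for $\theta\in\Theta_{01}$; $q(\theta)=r(\theta)=0$ for $\theta\in\Theta_0$. The efficient quantity is $q_e(\theta)=P^{-1}(\theta)$. A mechanism satisfies downward distortion (DD) if $q(\theta)\le q_e(\theta)$ for all $\theta$, with equality at $\theta=\underline\theta$. *)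

From HB Require Import structures.
From mathcomp Require Import all_boot all_order all_algebra.
From mathcomp Require Import all_classical all_reals all_analysis.
Set Implicit Arguments. Unset Strict Implicit. Unset Printing Implicit Defensive.
Import Order.TTheory GRing.Theory Num.Theory.
Import numFieldNormedType.Exports.
Local Open Scope classical_set_scope.
Local Open Scope ring_scope.

Section Model.
Variable R : realType.

Definition Vfun (P : R -> R) (q : R) : R :=
  Rintegral lebesgue_measure `[0, q] P.

Definition TS (P : R -> R) (c th q : R) : R :=
  if 0 < q then Vfun P q - c - th * q else 0.

(* efficient quantity q_e(theta) = P^{-1}(theta), the inverse of P on [0, qbar]
   (default value 0 if theta is not in the range of P on [0,qbar]) *)
Definition Pinv (P : R -> R) (qbar th : R) : R :=
  xget 0 [set q | 0 <= q <= qbar /\ P q = th].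

Definition is_mechanism (thl thh qbar : R) (r q u : R -> R) : Prop :=
  forall th, thl <= th <= thh ->
    [/\ 0 <= r th <= 1, 0 <= q th <= qbar & (q th = 0 <-> r th = 0)].

Definition IC (thl thh : R) (r q u : R -> R) : Prop :=
  forall th th', thl <= th <= thh -> thl <= th' <= thh ->
    u th >= u th' + (th' - th) * q th' * r th'.

Definition IR (thl thh : R) (u : R -> R) : Prop :=
  forall th, thl <= th <= thh -> 0 <= u th.

Definition floor_randomized (thl thh qhat : R) (r q u : R -> R) : Prop :=
  [/\ IC thl thh r q u, IR thl thh u, u thh = 0 &
    exists T1 T01 T0 : set R,
      [/\ [/\ is_interval T1, is_interval T01 & is_interval T0],
          T1 `|` T01 `|` T0 = [set` `[thl, thh]],
          [/\ T1 `&` T01 = set0, T1 `&` T0 = set0 & T01 `&` T0 = set0],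
          (forall x y, T0 x -> T01 y -> y < x) /\
          (forall x y, T01 x -> T1 y -> y < x) &
          [/\ (forall th, T1 th -> qhat <= q th /\ r th = 1),
              (forall th, T01 th -> q th = qhat /\ 0 < r th < 1) &
              (forall th, T0 th -> q th = 0 /\ r th = 0)]]].

Definition DD (P : R -> R) (qbar thl thh : R) (q : R -> R) : Prop :=
  (forall th, thl <= th <= thh -> q th <= Pinv P qbar th) /\
  q thl = Pinv P qbar thl.

Definition RSpt (P : R -> R) (c alpha : R) (r q u : R -> R) (th : R) : R :=
  r th * TS P c th (q th) - (1 - alpha) * u th.

Definition RSG (P : R -> R) (c alpha thl thh : R) (r q u : R -> R)
  (G : probability R R) : \bar R :=
  (\int[G]_(th in `[thl, thh]) (RSpt P c alpha r q u th)%:E)%E.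

Definition cdfG (G : probability R R) (x : R) : \bar R := G [set` `]-oo, x]].

End Model.

From HB Require Import structures.
From mathcomp Require Import all_boot all_order all_algebra.
From mathcomp Require Import all_classical all_reals all_analysis.
From mathcomp Require Import measurable_realfun.
From mathcomp Require Import ring lra.
Set Implicit Arguments. Unset Strict Implicit. Unset Printing Implicit Defensive.
Import Order.TTheory GRing.Theory Num.Theory.
Import numFieldNormedType.Exports.
Local Open Scope classical_set_scope.
Local Open Scope ring_scope.

(* Write RS_a = RS_0 + a u.  For s <= s' in Theta, the IC constraint of type s'
   against s bounds the rent difference u s - u s' by (s' - s) q(s) r(s), and
   downward distortion (s <= P (q s)) together with the floor (TS >= 0 at
   quantities >= qhat) then gives
     RS_0(s') - RS_0(s) <= (s' - s) (q(s) - q(s')).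
   As q is nonincreasing, summing this bound over finer and finer partitions shows
   that RS_0, hence RS_a, is nonincreasing on Theta.  Finally, a nonincreasing
   integrand has a smaller integral under a first-order dominating distribution:
   after clamping to Theta and shifting it to be nonnegative, its integral is
   the integral of G({g > t}) over t >= 0, and each {g > t} is a down-set, whose
   mass under G' is at most its mass under G. *)

Lemma nonincreasing_of_increment_bound (R : archiRealFieldType) (a b : R)
    (f g : R -> R) :
  {in `[a, b] &, {homo g : x y /~ x <= y}} ->
  {in `[a, b] &, forall x y, x <= y -> f y - f x <= (y - x) * (g x - g y)} ->
  {in `[a, b] &, {homo f : x y /~ x <= y}}.
Proof.
move=> g_dec f_incr y x yab xab le_xy.
have in_ab s : x <= s <= y -> s \in `[a, b].
  move=> /andP[xs sy]; move: xab yab.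
  rewrite !in_itv /= => /andP[ax _] /andP[_ yb].
  by rewrite (le_trans ax xs) (le_trans sy yb).
have mesh h : 0 < h -> f y - f x <= h * (g x - g y).
  move=> h0; suff: forall n s, x <= s <= y -> y - s <= n%:R * h ->
      f y - f s <= h * (g s - g y).
    move/(_ (Num.truncn ((y - x) / h)).+1 x); apply; first by rewrite lexx le_xy.
    by rewrite -ler_pdivrMr // ltW // truncnS_gt.
  elim=> [|n IH] s /andP[xs sy] ysn.
    have -> : s = y by lra.
    by rewrite !subrr mulr0.
  have sab : s \in `[a, b] by rewrite in_ab ?xs.
  have gsy : 0 <= g s - g y by rewrite subr_ge0 g_dec.
  have [ysh | hys] := lerP (y - s) h.
    exact: le_trans (f_incr _ _ sab yab sy) (ler_wpM2r gsy ysh).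
  have s_mid : x <= s + h <= y by lra.
  have shab : s + h \in `[a, b] by rewrite in_ab.
  have le_s_sh : s <= s + h by lra.
  have := f_incr _ _ sab shab le_s_sh.
  have := IH (s + h) s_mid; rewrite -natr1 mulrDl mul1r in ysn.
  have gdec : g (s + h) <= g s by rewrite g_dec // lerDl ltW.
  lra.
apply/ler_addgt0Pr => e e0.
have D0 : 0 <= g x - g y by rewrite subr_ge0 g_dec.
have he : 0 < e / (g x - g y + 1) by apply: divr_gt0; lra.
have := mesh _ he; suff : e / (g x - g y + 1) * (g x - g y) <= e by lra.
by rewrite mulrAC ler_pdivrMr; lra.
Qed.

Definition clamp (R : realDomainType) (a b x : R) := Num.min (Num.max x a) b.

Lemma clamp_itv (R : realDomainType) (a b x : R) :
  a <= b -> clamp a b x \in `[a, b].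
Proof.
move=> ab; rewrite in_itv /= /clamp ge_min lexx orbT andbT.
by rewrite le_min ab le_max lexx orbT.
Qed.

Lemma clamp_id (R : realDomainType) (a b x : R) :
  x \in `[a, b] -> clamp a b x = x.
Proof.
by rewrite in_itv /= /clamp => /andP[ax xb]; rewrite max_l // min_l.
Qed.

Lemma clamp_nondecreasing (R : realDomainType) (a b : R) :
  nondecreasing_fun (clamp a b).
Proof. by move=> x y xy; rewrite /clamp le_min2 // le_max2. Qed.

Lemma integral_itv_full_shift (R : realType) (mu : probability R R)
    (a b k : R) (f g : R -> R) :
  mu.-integrable setT (EFin \o g) -> mu [set` `[a, b]] = 1%E ->
  {in `[a, b], forall x, f x = g x + k} ->
  (\int[mu]_(x in `[a, b]) (f x)%:E = \int[mu]_x (g x)%:E + k%:E)%E.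
Proof.
move=> ig ab1 fE.
have mab : measurable [set` `[a, b]] by exact: measurable_itv.
have igk : mu.-integrable setT (fun x => (g x + k)%:E).
  under eq_fun do rewrite EFinD.
  by apply: integrableD => //; exact: finite_measure_integrable_cst.
have null_out : mu (~` [set` `[a, b]]) = 0%E.
  by rewrite probability_setC // ab1 subee.
rewrite (eq_integral (fun x => (g x + k)%:E)); last first.
  by move=> x; rewrite inE => /fE ->.
rewrite -[X in (\int[_]_(_ in X) _ = _)%E]setCK -setTD.
rewrite -(negligible_integral (measurableC mab)) //.
under eq_integral do rewrite EFinD.
rewrite integralD //; last exact: finite_measure_integrable_cst.
by rewrite integral_cst // -[k%:E in RHS]mule1 -(probability_setT mu).
Qed.

Section first_order_stochastic_dominance.
Context (R : realType) (G G' : probability R R).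
Hypothesis fosd : forall x, (cdfG G' x <= cdfG G x)%E.

Lemma itvNyo_bigcup (s : R) :
  [set` `]-oo, s[] = \bigcup_n [set` `]-oo, s - n.+1%:R^-1]].
Proof.
apply/seteqP; split=> x /=; rewrite in_itv /=.
- by move=> /ltr_add_invr[k xk]; exists k => //=; rewrite in_itv /= lerBrDr ltW.
- move=> [n _] /=; rewrite in_itv /= => /le_lt_trans; apply.
  by rewrite ltrBlDr ltrDl invr_gt0 ltr0n.
Qed.

Lemma le_measure_itvNyo (s : R) : (G' [set` `]-oo, s[] <= G [set` `]-oo, s[])%E.
Proof.
pose F n := [set` `]-oo, s - n.+1%:R^-1]].
have mF n : measurable (F n) by exact: measurable_itv.
have mU : measurable (\bigcup_n F n) by rewrite -itvNyo_bigcup.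
have ndF : {homo F : n m / (n <= m)%N >-> (n <= m)%O}.
  move=> n m nm; apply/subsetPset; apply: subset_itvl; rewrite bnd_simp.
  by rewrite lerB // lef_pV2 ?posrE ?ltr0n // ler_nat.
have cG := nondecreasing_cvg_mu (mu := G) mF mU ndF.
have cG' := nondecreasing_cvg_mu (mu := G') mF mU ndF.
rewrite itvNyo_bigcup -(cvg_lim (@ereal_hausdorff R) cG).
rewrite -(cvg_lim (@ereal_hausdorff R) cG').
apply: lee_lim; [exact: cvgP cG' | exact: cvgP cG |].
by apply: nearW => n; exact: fosd.
Qed.

Lemma downset_rayE (S : set R) :
  (forall x y, y <= x -> S x -> S y) -> S !=set0 -> ~ (S = setT) ->
  S = [set` `]-oo, sup S]] \/ S = [set` `]-oo, sup S[].
Proof.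
move=> downS [y0 Sy0] ST.
have [x0 Sx0] : exists x0, ~ S x0.
  by apply/existsNP => allS; apply: ST; apply/seteqP; split=> // x _; exact: allS.
have ub y : S y -> y < x0.
  by move=> Sy; rewrite ltNge; apply/negP => x0y; exact: Sx0 (downS _ _ x0y Sy).
have supS : has_sup S by split; [exists y0 | exists x0 => y /ub /ltW].
have [Ss|nSs] := pselect (S (sup S)); [left|right]; apply/seteqP; split=> x /=;
  rewrite in_itv /=.
- by move=> Sx; exact: sup_upper_bound.
- by move=> xs; exact: downS xs Ss.
- move=> Sx; rewrite lt_neqAle sup_upper_bound // andbT.
  by apply/eqP => xs; apply: nSs; rewrite -xs.
- rewrite -subr_gt0 => xs; have [e Se] := sup_adherent xs supS.
  by rewrite opprB addrCA subrr addr0 => /ltW xe; exact: downS xe Se.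
Qed.

Lemma le_measure_downset (S : set R) : measurable S ->
  (forall x y, y <= x -> S x -> S y) -> (G' S <= G S)%E.
Proof.
move=> mS downS.
have [->|ST] := pselect (S = setT); first by rewrite !probability_setT.
have [S0|/set0P S0] := eqVneq S set0; first by rewrite S0 !measure0.
have [->|->] := downset_rayE downS S0 ST; first exact: fosd.
exact: le_measure_itvNyo.
Qed.

Lemma le_integral_nonincreasing_ge0 (g : R -> R) :
  nonincreasing_fun g -> (forall x, 0 <= g x) ->
  (\int[G']_x (g x)%:E <= \int[G]_x (g x)%:E)%E.
Proof.
move=> g_dec g0; have mg := nonincreasing_measurable measurableT g_dec.
pose X : {RV G >-> R} := mfun_Sub (mem_set mg).
pose X' : {RV G' >-> R} := mfun_Sub (mem_set mg).
rewrite -[I in (_ <= I)%E](expectation_def X) -(expectation_def X').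
rewrite !ge0_expectation_ccdf //; apply: ge0_le_integral => //.
- exact: measurable_funS (ccdf_measurable _).
- exact: measurable_funS (ccdf_measurable _).
move=> t _; apply: le_measure_downset.
- by have := mg measurableT _ (measurable_itv `]t, +oo[); rewrite setTI.
- move=> x y yx /=; rewrite !in_itv /= !andbT => /lt_le_trans; apply.
  exact: g_dec.
Qed.

Lemma le_integral_itv_nonincreasing (a b : R) (f : R -> R) : a <= b ->
  G [set` `[a, b]] = 1%E -> G' [set` `[a, b]] = 1%E ->
  {in `[a, b] &, {homo f : x y /~ x <= y}} ->
  (\int[G']_(x in `[a, b]) (f x)%:E <= \int[G]_(x in `[a, b]) (f x)%:E)%E.
Proof.
move=> ab G1 G'1 f_dec.
have bab : b \in `[a, b] by rewrite in_itv /= ab lexx.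
pose g x := f (clamp a b x) - f b.
have g_dec : nonincreasing_fun g.
  by move=> x y xy; rewrite lerD2r f_dec ?clamp_itv ?clamp_nondecreasing.
have g_bound x : 0 <= g x <= f a - f b.
  have aab : a \in `[a, b] by rewrite in_itv /= ab lexx.
  have cab := clamp_itv x ab; move: (cab); rewrite in_itv /= => /andP[ax xb].
  by rewrite subr_ge0 lerD2r !f_dec.
have fE : {in `[a, b], forall x, f x = g x + f b}.
  by move=> x xab; rewrite /g clamp_id // subrK.
have ig (mu : probability R R) : mu.-integrable setT (EFin \o g).
  apply: measurable_bounded_integrable => //.
  - by rewrite (le_lt_trans (probability_le1 _ _)) ?ltry.
  - exact: nonincreasing_measurable.
  exists (f a - f b); split; first exact: num_real.
  move=> M bM x _; have /andP[g0 gb] := g_bound x.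
  by rewrite /= ger0_norm // ltW // (le_lt_trans gb).
rewrite (integral_itv_full_shift (ig G') G'1 fE).
rewrite (integral_itv_full_shift (ig G) G1 fE) leeD2r //.
by apply: le_integral_nonincreasing_ge0 => // x; case/andP: (g_bound x).
Qed.

End first_order_stochastic_dominance.

Lemma floor_pair_le (R : realFieldType) (qhat q r q' r' : R) :
  0 < qhat -> r <= 1 -> r' <= 1 ->
  qhat <= q -> (r < 1 -> q = qhat) -> qhat <= q' -> (r' < 1 -> q' = qhat) ->
  q' * r' <= q * r -> q' <= q /\ r' <= r.
Proof.
move=> qhat0 r1 r1' qhq floor qhq' floor' le_qr.
have le_q : q' <= q.
  rewrite leNgt; apply/negP => lt_q.
  have r'E : r' = 1.
    by apply/eqP; rewrite eq_le r1' leNgt; apply/negP => /floor' q'E; lra.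
  rewrite r'E mulr1 in le_qr; nra.
split=> //; rewrite leNgt; apply/negP => lt_r.
have qE : q = qhat by apply: floor; lra.
have q'E : q' = q by apply/eqP; rewrite eq_le le_q qE qhq'.
rewrite q'E in le_qr; nra.
Qed.

Section surplus.
Variables (R : realType) (c qbar qhat : R) (P : R -> R).
Hypothesis P_cont : {within `[0, qbar], continuous P}.
Hypothesis P_dec : {in `[0, qbar] &, forall x y, x < y -> P y < P x}.

Lemma P_nonincreasing (x y : R) : 0 <= y -> y <= x -> x <= qbar -> P x <= P y.
Proof.
move=> y0 yx xq; have [<-//|neq_yx] := eqVneq y x.
have x0 := le_trans y0 yx; have yq := le_trans yx xq.
by apply/ltW/P_dec; rewrite ?in_itv /= ?y0 ?x0 ?yq ?xq // lt_neqAle neq_yx.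
Qed.

Lemma Vfun_sub_ge (x y : R) : 0 <= y -> y <= x -> x <= qbar ->
  (x - y) * P x <= Vfun P x - Vfun P y.
Proof.
move=> y0 yx xq; have [<-|neq_yx] := eqVneq y x; first by rewrite !subrr mul0r.
have lt_yx : y < x by rewrite lt_neqAle neq_yx.
have P_int_x : lebesgue_measure.-integrable [set` `[0, x]] (EFin \o P).
  apply: continuous_compact_integrable; first exact: segment_compact.
  apply: continuous_subspaceW P_cont; apply: subset_itvl.
  by rewrite bnd_simp.
have P_int_yx : lebesgue_measure.-integrable [set` `]y, x]] (EFin \o P).
  by apply: integrableS P_int_x => //; apply: subset_itvr; rewrite bnd_simp.
have cst_int_yx : lebesgue_measure.-integrable [set` `]y, x]] (EFin \o cst (P x)).
  apply: measurable_bounded_integrable => //; last exact: bounded_cst.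
  by rewrite /= lebesgue_measure_itv /= lte_fin lt_yx ltry.
rewrite /Vfun (Rintegral_itvB P_int_x) ?bnd_simp //.
apply: (@le_trans _ _ (\int[lebesgue_measure]_(z in `]y, x]) P x)).
  by rewrite Rintegral_cst //= lebesgue_measure_itv /= lte_fin lt_yx /= mulrC.
apply: le_Rintegral => // z /=; rewrite in_itv /= => /andP[yz zx].
exact: P_nonincreasing (le_trans y0 (ltW yz)) zx xq.
Qed.

Lemma TS_shift (s s' x : R) : 0 <= x -> TS P c s' x = TS P c s x - (s' - s) * x.
Proof.
rewrite le_eqVlt => /predU1P[<-|x0]; first by rewrite /TS ltxx mulr0 subr0.
by rewrite /TS x0; ring.
Qed.

Hypothesis qhat_range : 0 < qhat <= qbar.
Hypothesis qhat_floor : Vfun P qhat - qhat * P qhat = c.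

Lemma TS_qhat (s : R) : TS P c s qhat = qhat * (P qhat - s).
Proof.
by case/andP: qhat_range => qhat0 _; rewrite /TS qhat0 -qhat_floor; ring.
Qed.

Lemma TS_sub_le (s x y : R) : 0 < y -> y <= x -> x <= qbar ->
  TS P c s y - TS P c s x <= (s - P x) * (x - y).
Proof.
move=> y0 yx xq; have := Vfun_sub_ge (ltW y0) yx xq.
by rewrite /TS y0 (lt_le_trans y0 yx); lra.
Qed.

Lemma TS_ge0 (s x : R) : qhat <= x -> x <= qbar -> s <= P x -> 0 <= TS P c s x.
Proof.
case/andP: qhat_range => qhat0 qhatq qx xq sPx.
have := TS_sub_le s qhat0 qx xq; rewrite TS_qhat.
have : P x <= P qhat by apply: P_nonincreasing (ltW qhat0) qx xq.
nra.
Qed.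

Section mechanism.
Variables (thl thh : R) (r q u : R -> R).
Hypothesis mech : is_mechanism thl thh qbar r q u.
Hypothesis ic : IC thl thh r q u.
Hypothesis dd : DD P qbar thl thh q.
(* This is all that is used of floor randomization: IC alone already orders
   the three pieces of Theta, see [floor_monotone]. *)
Hypothesis floor : {in `[thl, thh], forall s,
  r s != 0 -> qhat <= q s /\ (r s < 1 -> q s = qhat)}.

Let mech_at s : s \in `[thl, thh] ->
  [/\ 0 <= r s <= 1, 0 <= q s <= qbar & (q s = 0 <-> r s = 0)].
Proof. by rewrite in_itv => /mech. Qed.

Let ic_at s s' : s \in `[thl, thh] -> s' \in `[thl, thh] ->
  u s' + (s' - s) * q s' * r s' <= u s.
Proof. by rewrite !in_itv => /ic; apply. Qed.

Lemma u_nonincreasing : {in `[thl, thh] &, {homo u : s s' /~ s <= s'}}.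
Proof.
move=> s' s s'_in s_in le_ss'; have := ic_at s_in s'_in.
have [/andP[r0 _] /andP[q0 _] _] := mech_at s'_in.
suff : 0 <= (s' - s) * q s' * r s' by lra.
by rewrite !mulr_ge0 // subr_ge0.
Qed.

Lemma qr_nonincreasing :
  {in `[thl, thh] &, {homo (fun s => q s * r s) : s s' /~ s <= s'}}.
Proof.
move=> s' s s'_in s_in; rewrite le_eqVlt => /predU1P[->//|lt_ss'].
have := ic_at s_in s'_in; have := ic_at s'_in s_in.
rewrite -!mulrA; set w := q s * r s; set w' := q s' * r s'; nra.
Qed.

Lemma DD_le_P s : s \in `[thl, thh] -> 0 < q s -> s <= P (q s).
Proof.
move=> s_in qs0; have [_ /andP[_ qsq] _] := mech_at s_in.
have := dd.1 s; rewrite in_itv in s_in => /(_ s_in); rewrite /Pinv.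
case: xgetP => [x _ [/andP[_ xq] Pxs] le_qx | _ qs_le0]; last by lra.
by rewrite -{1}Pxs P_nonincreasing // ltW.
Qed.

Lemma floor_monotone s s' : s \in `[thl, thh] -> s' \in `[thl, thh] ->
  s <= s' -> r s' != 0 -> [/\ qhat <= q s', q s' <= q s & r s' <= r s].
Proof.
move=> s_in s'_in le_ss' rs'0.
have [/andP[r0 r1] /andP[q0 _] _] := mech_at s_in.
have [/andP[r0' r1'] _ _] := mech_at s'_in.
have qhat0 : 0 < qhat by case/andP: qhat_range.
have [qhq' floor'] := floor s'_in rs'0.
have w_le := qr_nonincreasing s'_in s_in le_ss'.
have rs0 : r s != 0.
  have rs'_pos : 0 < r s' by rewrite lt_neqAle eq_sym rs'0.
  apply: contraTneq w_le => ->; rewrite mulr0 -ltNge.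
  by rewrite mulr_gt0 // (lt_le_trans qhat0).
have [qhq floor_s] := floor s_in rs0.
by have [] := floor_pair_le qhat0 r1 r1' qhq floor_s qhq' floor' w_le.
Qed.

Lemma q_nonincreasing : {in `[thl, thh] &, {homo q : s s' /~ s <= s'}}.
Proof.
move=> s' s s'_in s_in le_ss'; have [_ /andP[q0 _] _] := mech_at s_in.
have [rs'0|rs'0] := eqVneq (r s') 0.
  by have [_ _ [_ /(_ rs'0) ->]] := mech_at s'_in.
by case: (floor_monotone s_in s'_in le_ss' rs'0).
Qed.

Lemma r_TS_ge0 s : s \in `[thl, thh] -> 0 <= r s * TS P c s (q s).
Proof.
move=> s_in; have [-> | rs0] := eqVneq (r s) 0; first by rewrite mul0r.
have [/andP[r0 _] /andP[_ qq] _] := mech_at s_in.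
have [qhq _] := floor s_in rs0.
have qs0 : 0 < q s by apply: lt_le_trans qhq; case/andP: qhat_range.
by rewrite mulr_ge0 // TS_ge0 // DD_le_P.
Qed.

Lemma RSpt0_increment s s' : s \in `[thl, thh] -> s' \in `[thl, thh] -> s <= s' ->
  RSpt P c 0 r q u s' - RSpt P c 0 r q u s <= (s' - s) * (q s - q s').
Proof.
move=> s_in s'_in le_ss'; rewrite /RSpt subr0 !mul1r.
have [/andP[r0 r1] /andP[q0 qq] _] := mech_at s_in.
have [/andP[r0' r1'] /andP[q0' qq'] [_ qE']] := mech_at s'_in.
have := ic_at s'_in s_in.
suff : r s' * TS P c s' (q s') - r s * TS P c s' (q s) <= (s' - s) * (q s - q s').
  by rewrite (TS_shift s s' q0); lra.
have := r_TS_ge0 s_in.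
have [rs'0|rs'0] := eqVneq (r s') 0.
  rewrite rs'0 (qE' rs'0) (TS_shift s s' q0) mul0r.
  have : 0 <= (1 - r s) * ((s' - s) * q s) by rewrite !mulr_ge0 // subr_ge0.
  lra.
have [qhq' le_q le_r] := floor_monotone s_in s'_in le_ss' rs'0.
have qs'0 : 0 < q s' by apply: lt_le_trans qhq'; case/andP: qhat_range.
have qs0 := lt_le_trans qs'0 le_q.
have TS'0 : 0 <= TS P c s' (q s') by rewrite TS_ge0 // DD_le_P.
have TS_sub := TS_sub_le s' qs'0 le_q qq.
have sP := DD_le_P s_in qs0.
(* r' TS(s', q') - r TS(s', q)
     = (r' - r) TS(s', q') + r (TS(s', q') - TS(s', q)) *)
have h1 : 0 <= (r s - r s') * TS P c s' (q s') by rewrite mulr_ge0 // subr_ge0.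
have h2 : 0 <= r s * ((s' - P (q s)) * (q s - q s') -
                     (TS P c s' (q s') - TS P c s' (q s))).
  by rewrite mulr_ge0 // subr_ge0.
have h3 : 0 <= r s * ((P (q s) - s) * (q s - q s')).
  by rewrite !mulr_ge0 // subr_ge0.
have h4 : 0 <= (1 - r s) * ((s' - s) * (q s - q s')).
  by rewrite !mulr_ge0 // subr_ge0.
lra.
Qed.

Lemma RSpt_nonincreasing (alpha : R) : 0 <= alpha ->
  {in `[thl, thh] &, {homo RSpt P c alpha r q u : s s' /~ s <= s'}}.
Proof.
move=> alpha0 s' s s'_in s_in le_ss'.
have RS0_dec := nonincreasing_of_increment_bound q_nonincreasing RSpt0_increment.
have := RS0_dec _ _ s'_in s_in le_ss'; rewrite /RSpt subr0 !mul1r.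
have : alpha * u s' <= alpha * u s by rewrite ler_wpM2l // u_nonincreasing.
lra.
Qed.

End mechanism.

End surplus.

Lemma floor_randomized_floor (R : realType) (thl thh qhat : R) (r q u : R -> R) :
  floor_randomized thl thh qhat r q u ->
  {in `[thl, thh], forall s, r s != 0 -> qhat <= q s /\ (r s < 1 -> q s = qhat)}.
Proof.
case=> _ _ _ [T1 [T01 [T0 [_ cover _ _ [on_T1 on_T01 on_T0]]]]] s s_in rs0.
have : [set` `[thl, thh]] s by [].
rewrite -cover => -[[/on_T1[qhq ->] | /on_T01[-> _]] | /on_T0[_ r0]].
- by rewrite ltxx.
- by rewrite lexx.
- by rewrite r0 eqxx in rs0.
Qed.

Theorem lemma2 (R : realType) (thl thh c qbar alpha qhat : R) (P : R -> R)
  (Hth : 0 < thl < thh) (Hc : 0 < c) (Hqbar : 0 < qbar)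
  (HPcont : {within `[0, qbar], continuous P})
  (HPdec : {in `[0, qbar] &, forall x y, x < y -> P y < P x})
  (HPqbar : P qbar = 0)
  (HA2 : 0 < TS P c thh (Pinv P qbar thh))
  (Halpha : 0 <= alpha < 1)
  (Hqhat : 0 < qhat <= qbar) (Hqhat_eq : Vfun P qhat - qhat * P qhat = c)
  (r q u : R -> R)
  (HM : is_mechanism thl thh qbar r q u)
  (HFR : floor_randomized thl thh qhat r q u)
  (HDD : DD P qbar thl thh q)
  (G G' : probability R R)
  (HG : G [set` `[thl, thh]] = 1%E) (HG' : G' [set` `[thl, thh]] = 1%E)
  (Hfosd : forall x : R, (cdfG G' x <= cdfG G x)%E) :
  (RSG P c alpha thl thh r q u G' <= RSG P c alpha thl thh r q u G)%E.
Proof.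
case/andP: Hth => _ lt_thl_thh; case/andP: Halpha => alpha0 _.
have [ic _ _ _] := HFR.
apply: le_integral_itv_nonincreasing => //; first exact: ltW.
move=> x y; apply: (RSpt_nonincreasing HPcont HPdec Hqhat Hqhat_eq HM ic HDD
  (floor_randomized_floor HFR) alpha0).
Qed.
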